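(* The convex Vietoris functor $\mathbb{V}^{\mathrm{c}}\colon\mathbf{CompOrd}\to\mathbf{CompOrd}$ preserves coreflexive equalizers: if $f,g\colon X\to Y$ are morphisms in $\mathbf{CompOrd}$ with a common retraction $k\colon Y\to X$ ($k\circ f=k\circ g=1_X$) and $h\colon E\to X$ is an equalizer of $f,g$ in $\mathbf{CompOrd}$, then $\mathbb{V}^{\mathrm{c}}h$ is an equalizer of $\mathbb{V}^{\mathrm{c}}f$ and $\mathbb{V}^{\mathrm{c}}g$ in $\mathbf{CompOrd}$.
   Context: $\mathbf{CompOrd}$ is the category of compact ordered spaces (compact Hausdorff spaces with a partial order closed in $X\times X$) and continuous order-preserving maps. For a subset $Y$ of a poset, $\uparrow Y$, $\downarrow Y$ are up- and down-closure; $Y$ is convex if $y_1\le x\le y_2$ with $y_1,y_2\in Y$ implies $x\in Y$; $\updownarrow Y=\uparrow Y\cap\downarrow Y$. $\mathbb{V}^{\mathrm{c}}X$ is the set of closed convex subsets of $X$ (including $\varnothing$) with the topology generated by $\Diamond U=\{K\mid K\cap U\neq\varnothing\}$ and $\Box U=\{K\mid K\subseteq U\}$ ($U$ open upset or open downset of $X$) and the Egli–Milner order $K\le_{\mathrm{EM}}L$ iff $\uparrow L\subseteq\uparrow K$ and $\downarrow K\subseteq\downarrow L$; it is a compact ordered space, and $\mathbb{V}^{\mathrm{c}}f(K)=\updownarrow f[K]$ defines an endofunctor. *)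

From HB Require Import structures.
From mathcomp Require Import all_boot all_order.
From mathcomp Require Import all_classical.
From mathcomp Require Import topology.


Local Open Scope classical_set_scope.

Section order_notions.
Context {T : Type} (le : T -> T -> Prop).

Definition upc (A : set T) : set T := [set y | exists2 x, A x & le x y].
Definition downc (A : set T) : set T := [set y | exists2 x, A x & le y x].
Definition updownc (A : set T) : set T := upc A `&` downc A.

Definition is_upset (A : set T) := forall x y, A x -> le x y -> A y.
Definition is_downset (A : set T) := forall x y, A x -> le y x -> A y.

Definition order_convex (A : set T) :=
  forall y1 x y2, A y1 -> A y2 -> le y1 x -> le x y2 -> A x.

Definition is_partial_order :=
  [/\ forall x, le x x,
      forall x y z, le x y -> le y z -> le x z &
      forall x y, le x y -> le y x -> x = y].
End order_notions.

Definition compord {X : topologicalType} (le : X -> X -> Prop) :=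
  [/\ compact [set: X], hausdorff_space X, is_partial_order le &
      closed [set p : X * X | le p.1 p.2]].

Definition compord_hom {X Y : topologicalType}
  (leX : X -> X -> Prop) (leY : Y -> Y -> Prop) (f : X -> Y) :=
  continuous f /\ forall x y, leX x y -> leY (f x) (f y).

Definition is_equalizer {E X Y : topologicalType}
  (leE : E -> E -> Prop) (leX : X -> X -> Prop) (leY : Y -> Y -> Prop)
  (h : E -> X) (f g : X -> Y) :=
  [/\ compord leE /\ compord leX /\ compord leY,
      compord_hom leE leX h /\ compord_hom leX leY f /\ compord_hom leX leY g,
      f \o h = g \o h &
      forall (Z : topologicalType) (leZ : Z -> Z -> Prop), compord leZ ->
        forall u : Z -> X, compord_hom leZ leX u -> f \o u = g \o u ->
          exists! v : Z -> E, compord_hom leZ leE v /\ h \o v = u].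

Definition VC (X : topologicalType) (le : X -> X -> Prop) : Type :=
  {K : set X | closed K /\ order_convex le K}.

HB.instance Definition _ {X : topologicalType} (le : X -> X -> Prop) :=
  gen_eqMixin (@VC X le).
HB.instance Definition _ {X : topologicalType} (le : X -> X -> Prop) :=
  gen_choiceMixin (@VC X le).

Definition vc_diamond {X : topologicalType} (le : X -> X -> Prop)
  (U : set X) : set (VC X le) := [set K | (proj1_sig K `&` U) !=set0].
Definition vc_box {X : topologicalType} (le : X -> X -> Prop)
  (U : set X) : set (VC X le) := [set K | proj1_sig K `<=` U].

Definition vc_subbase_index {X : topologicalType} (le : X -> X -> Prop) :
  set (bool * set X) :=
  [set p | open p.2 /\ (is_upset le p.2 \/ is_downset le p.2)].

Definition vc_subbase {X : topologicalType} (le : X -> X -> Prop)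
  (p : bool * set X) : set (VC X le) :=
  if p.1 then vc_diamond le p.2 else vc_box le p.2.

HB.instance Definition _ {X : topologicalType} (le : X -> X -> Prop) :=
  @isSubBaseTopological.Build (@VC X le) (bool * set X)%type
    (vc_subbase_index le) (vc_subbase le).

Definition vc_le {X : topologicalType} (le : X -> X -> Prop)
  (K L : VC X le) : Prop :=
  upc le (proj1_sig L) `<=` upc le (proj1_sig K) /\
  downc le (proj1_sig K) `<=` downc le (proj1_sig L).

Lemma vc_empty_prop {X : topologicalType} (le : X -> X -> Prop) :
  closed (@set0 X) /\ order_convex le (@set0 X).
Proof. by split; [exact: closed0 | move=> ? ? ? []]. Qed.

Definition vc_empty {X : topologicalType} (le : X -> X -> Prop) : VC X le :=
  exist _ set0 (vc_empty_prop le).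

(* V^c f (K) = updown (f[K]).  For a morphism between compact ordered
   spaces this set is always closed and convex; the default branch
   (empty set) is never used in that situation. *)
Definition vc_map {X Y : topologicalType} (leX : X -> X -> Prop)
  (leY : Y -> Y -> Prop) (f : X -> Y) (K : VC X leX) : VC Y leY :=
  let S := updownc leY (f @` proj1_sig K) in
  match pselect (closed S /\ order_convex leY S) with
  | left p => exist _ S p
  | right _ => vc_empty leY
  end.

(* An equalizer h in CompOrd is an order embedding whose image is
   {x | f x = g x}.  If V^c f L = V^c g L, then f[L] and g[L] have the same
   up- and down-closures, and the retraction k forces f m = g m at every
   minimal or maximal point m of L.  Since each point of the closed set L lies
   above a minimal and below a maximal point of L (Zorn and compactness), L is
   the convex hull of its part inside the image of h; hence L |-> h^-1(L)
   inverts V^c h on the equalized elements, and it is monotone and continuous. *)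

From HB Require Import structures.
From mathcomp Require Import all_boot all_order.
From mathcomp Require Import all_classical.
From mathcomp Require Import topology.

Local Open Scope classical_set_scope.

Section CompOrdFacts.
Context {X : topologicalType} {le : X -> X -> Prop} (cX : compord le).

Lemma compord_refl (x : X) : le x x.
Proof. by case: cX => _ _ []. Qed.

Lemma compord_trans {x y z : X} : le x y -> le y z -> le x z.
Proof. by case: cX => _ _ [_ trans _] _; exact: trans. Qed.

Lemma compord_antisym {x y : X} : le x y -> le y x -> x = y.
Proof. by case: cX => _ _ [_ _ anti] _; exact: anti. Qed.

Lemma compord_compact : compact [set: X].
Proof. by case: cX. Qed.

Lemma compord_hausdorff : hausdorff_space X.
Proof. by case: cX. Qed.

Lemma compord_le_closed : closed [set p : X * X | le p.1 p.2].
Proof. by case: cX. Qed.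

Lemma closed_compact {A : set X} : closed A -> compact A.
Proof.
by move=> cA; exact: (subclosed_compact cA compord_compact (@subsetT _ A)).
Qed.

Lemma point_closed (x : X) : closed [set x].
Proof. by apply: (compact_closed compord_hausdorff); exact: compact_set1. Qed.

(* The opposite order makes X a compact ordered space again; this lets every
   statement about upsets be transported to downsets. *)
Lemma compord_dual : compord (fun a b => le b a).
Proof.
split; [exact: compord_compact | exact: compord_hausdorff | split | ].
- exact: compord_refl.
- by move=> x y z xy yz; exact: compord_trans yz xy.
- by move=> x y xy yx; exact: compord_antisym yx xy.
- have -> : [set p : X * X | le p.2 p.1] =
      (fun p : X * X => (p.2, p.1)) @^-1` [set p : X * X | le p.1 p.2] by [].
  apply: preimage_closed; last exact: compord_le_closed.
  by move=> p _; exact: swap_continuous.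
Qed.
End CompOrdFacts.

Lemma continuous_closed_image {T U : topologicalType} {f : T -> U} {A : set T} :
  compact [set: T] -> hausdorff_space U -> continuous f -> closed A ->
  closed (f @` A).
Proof.
move=> cT hU cf cA; apply: (compact_closed hU); apply: continuous_compact.
  exact: continuous_subspaceT.
exact: (subclosed_compact cA cT (@subsetT _ A)).
Qed.

Section Tube.
Context {T U : topologicalType}.

Lemma tube_point (x : T) {Q : set U} {S : set (T * U)} :
  compact Q -> open S -> (forall b, Q b -> S (x, b)) ->
  exists2 A, nbhs x A & set_nbhs Q [set b | forall a, A a -> S (a, b)].
Proof.
move=> /compact_near_coveringP cQ oS QS.
have := cQ (set T) (powerset_filter_from (nbhs x))
  (fun A b => nbhs b [set b' | forall a, A a -> S (a, b')]) _.
case.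
- move=> b Qb.
  have : nbhs (x, b) S by apply: open_nbhs_nbhs; split => //; exact: QS.
  case=> -[A0 B0] [/= A0x B0b] A0B0S.
  have [B1 [[oB1 B1b] B1B0]] : exists B1, open_nbhs b B1 /\ B1 `<=` B0.
    by move: B0b; rewrite nbhsE => -[B1 ? ?]; exists B1.
  exists (B1, [set A | nbhs x A /\ A `<=` A0]).
    split => /=; first exact: open_nbhs_nbhs.
    exact: powerset_filter_fromP.
  case=> b'' A /= [B1b'' [_ AA0]].
  apply: filterS (open_nbhs_nbhs (conj oB1 B1b'')) => b' B1b' a Aa.
  by apply: A0B0S; split; [exact: AA0 | exact: B1B0].
- move=> M [FM _ [A MA]] MQ.
  exists A; first exact: FM.
  by move=> b Qb; exact: (MQ _ MA _ Qb).
Qed.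

Lemma tube {P : set T} {Q : set U} {S : set (T * U)} :
  compact P -> compact Q -> open S -> P `*` Q `<=` S ->
  exists A B, [/\ open A, open B, P `<=` A, Q `<=` B &
    forall a b, A a -> B b -> S (a, b)].
Proof.
move=> cP cQ oS PQS.
have [->|/set0P [q0 Qq0]] := eqVneq Q set0.
  by exists setT, set0; split => //; [exact: openT|exact: open0].
have PF : ProperFilter (set_nbhs Q) by apply: set_nbhs_pfilter; exists q0.
move/compact_near_coveringP : cP => cP.
have := cP (set U) (powerset_filter_from (set_nbhs Q))
  (fun B a => nbhs a [set a' | forall b, B b -> S (a', b)]) _.
case.
- move=> x Px.
  have [A Ax QB] := tube_point x cQ oS (fun b Qb => PQS (x, b) (conj Px Qb)).
  have [A1 [[oA1 A1x] A1A]] : exists A1, open_nbhs x A1 /\ A1 `<=` A.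
    by move: Ax; rewrite nbhsE => -[A1 ? ?]; exists A1.
  exists (A1, [set B | set_nbhs Q B /\ B `<=` [set b | forall a, A a -> S (a, b)]]).
    split => /=; first exact: open_nbhs_nbhs.
    exact: powerset_filter_fromP.
  case=> x' B /= [A1x' [_ BS]].
  apply: filterS (open_nbhs_nbhs (conj oA1 A1x')) => a' A1a' b Bb.
  by apply: BS => //; exact: A1A.
- move=> M [FM _ [B MB]] MP.
  have /set_nbhsP [D [oD QD DB]] := FM _ MB.
  have : set_nbhs P [set a' | forall b, B b -> S (a', b)] by move=> a Pa; exact: MP.
  move=> /set_nbhsP [C [oC PC CS]].
  exists C, D; split => // a b Ca Db; apply: CS => //; exact: DB.
Qed.
End Tube.

(* In a compact ordered space the up-closure of a closed set is closed: it is
   the projection of the compact set (A x X) /\ {(a, y) | a <= y}. *)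
Lemma upc_closed {X : topologicalType} {le : X -> X -> Prop} (cX : compord le)
  {A : set X} : closed A -> closed (upc le A).
Proof.
move=> cA.
have -> : upc le A = snd @` ((A `*` setT) `&` [set p : X * X | le p.1 p.2]).
  apply/seteqP; split; first by move=> y [x Ax xy]; exists (x, y).
  by move=> _ [[x y] [[Ax _] /= xy] <-]; exists x.
apply: (compact_closed (compord_hausdorff cX)); apply: continuous_compact.
  by apply: continuous_subspaceT => -[a b]; exact: cvg_snd.
apply: compact_closedI; last exact: compord_le_closed cX.
apply: compact_setX; [exact: (closed_compact cX cA) | exact: compord_compact cX].
Qed.

Lemma downc_closed {X : topologicalType} {le : X -> X -> Prop} (cX : compord le)
  {A : set X} : closed A -> closed (downc le A).
Proof. by move=> cA; have := upc_closed (compord_dual cX) cA. Qed.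

Lemma sep_up {X : topologicalType} {le : X -> X -> Prop} (cX : compord le)
  (K : set X) (y : X) : closed K -> ~ upc le K y ->
  exists U D, [/\ open U, is_upset le U, open D & is_downset le D] /\
    [/\ K `<=` U, D y & forall z, U z -> D z -> False].
Proof.
move=> cK nKy.
have PQ : upc le K `*` downc le [set y] `<=` ~` [set p : X * X | le p.1 p.2].
  case=> a b /= [[k Kk ka] [_ -> b_y]] ab; apply: nKy; exists k => //.
  exact: (compord_trans cX (compord_trans cX ka ab) b_y).
have [A [B [oA oB PA QB AB]]] := tube
  (closed_compact cX (upc_closed cX cK))
  (closed_compact cX (downc_closed cX (point_closed cX y)))
  (closed_openC (compord_le_closed cX)) PQ.
exists (~` downc le (~` A)), (~` upc le (~` B)); split; first split.
- exact/closed_openC/(downc_closed cX)/open_closedC.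
- move=> a b Ua ab [w nAw bw]; apply: Ua; exists w => //.
  exact: (compord_trans cX ab bw).
- exact/closed_openC/(upc_closed cX)/open_closedC.
- move=> a b Da ba [w nBw wb]; apply: Da; exists w => //.
  exact: (compord_trans cX wb ba).
split.
- by move=> k Kk [w nAw kw]; apply: nAw; apply: PA; exists k.
- by move=> [w nBw wy]; apply: nBw; apply: QB; exists y.
- move=> z Uz Dz.
  have Az : A z.
    by apply: contra_notP Uz => nAz; exists z => //; exact: compord_refl.
  have Bz : B z.
    by apply: contra_notP Dz => nBz; exists z => //; exact: compord_refl.
  exact: (AB z z Az Bz (compord_refl cX z)).
Qed.

Lemma sep_down {X : topologicalType} {le : X -> X -> Prop} (cX : compord le)
  (L : set X) (x : X) : closed L -> ~ downc le L x ->
  exists D U, [/\ open D, is_downset le D, open U & is_upset le U] /\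
    [/\ L `<=` D, U x & forall z, D z -> U z -> False].
Proof. exact: sep_up (compord_dual cX) L x. Qed.

(* A chain of points of a closed set L has a lower bound in L: the sets
   L /\ down c, for c in the chain, have the finite intersection property. *)
Lemma chain_lower_bound {X : topologicalType} {le : X -> X -> Prop}
  (cX : compord le) (L C : set X) : closed L -> C `<=` L -> C !=set0 ->
  total_on C le -> exists2 p, L p & forall c, C c -> le p c.
Proof.
move=> cL CL [c0 Cc0] Ctot.
pose G := filter_from C (fun c => L `&` downc le [set c]).
have FG : ProperFilter G.
  apply: filter_from_proper; last first.
    move=> c Cc; exists c; split; first exact: CL.
    by exists c => //; exact: compord_refl.
  apply: filter_from_filter; first by exists c0.
  move=> i j Ci Cj; have [ij|ji] := Ctot _ _ Ci Cj.
  + exists i => // z [Lz [_ -> zi]].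
    split; split => //; first by exists i.
    by exists j => //; exact: (compord_trans cX zi ij).
  + exists j => // z [Lz [_ -> zj]].
    split; split => //; last by exists j.
    by exists i => //; exact: (compord_trans cX zj ji).
have [p [_ clp]] := compord_compact cX G FG filterT.
have below c : C c -> L p /\ le p c.
  move=> Cc; have cLc : closed (L `&` downc le [set c]).
    by apply: closedI => //; exact: (downc_closed cX (point_closed cX c)).
  have : closure (L `&` downc le [set c]) p.
    by move: clp; rewrite clusterE; apply; exists c.
  by rewrite -((closure_id _).1 cLc) => -[Lp [_ -> pc]].
by exists p; [exact: (below c0 Cc0).1 | move=> c /below []].
Qed.

(* Every point of a closed set L lies above a minimal point of L: Zorn's lemma
   on the points of L below x, chains being bounded by chain_lower_bound. *)
Lemma minimal_below {X : topologicalType} {le : X -> X -> Prop} (cX : compord le)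
  (L : set X) (x : X) : closed L -> L x ->
  exists m, [/\ L m, le m x & forall l, L l -> le l m -> l = m].
Proof.
move=> cL Lx.
pose T0 := {m : X | L m /\ le m x}.
pose R0 := fun s t : T0 => `[< le (sval t) (sval s) >].
have [||||t tmax] := @Zorn T0 R0.
- by move=> s; apply/asboolP; exact: compord_refl.
- move=> r s t /asboolP rs /asboolP st; apply/asboolP.
  exact: (compord_trans cX st rs).
- move=> [s ps] [t pt] /asboolP /= st /asboolP /= ts; apply: eq_exist.
  exact: (compord_antisym cX ts st).
- move=> A Atot.
  have [[a0 Aa0]|A0] := pselect (A !=set0); last first.
    exists (exist _ x (conj Lx (compord_refl cX x))) => s As.
    by exfalso; apply: A0; exists s.
  have AL : sval @` A `<=` L by move=> _ [s _ <-]; case: (svalP s).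
  have Atot' : total_on (sval @` A) le.
    move=> _ _ [s As <-] [t At <-].
    by case: (Atot _ _ As At) => /asboolP; [right | left].
  have a0A : (sval @` A) (sval a0) by exists a0.
  have [p Lp pA] := chain_lower_bound cX L (sval @` A) cL AL
    (ex_intro _ _ a0A) Atot'.
  have px : le p x := compord_trans cX (pA _ a0A) (proj2 (svalP a0)).
  by exists (exist _ p (conj Lp px)) => s As; apply/asboolP; apply: pA; exists s.
- exists (sval t); split; [exact: (proj1 (svalP t)) | exact: (proj2 (svalP t)) |].
  move=> l Ll lt.
  have := tmax (exist _ l (conj Ll (compord_trans cX lt (proj2 (svalP t))))).
  by move=> /(_ (introT (asboolP _) lt)) /(congr1 sval).
Qed.

Lemma maximal_above {X : topologicalType} {le : X -> X -> Prop} (cX : compord le)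
  (L : set X) (x : X) : closed L -> L x ->
  exists m, [/\ L m, le x m & forall l, L l -> le m l -> l = m].
Proof. exact: minimal_below (compord_dual cX) L x. Qed.

Section UpDownClosure.
Context {T : Type} {le : T -> T -> Prop}.
Hypothesis le_refl : forall x, le x x.
Hypothesis le_trans : forall x y z, le x y -> le y z -> le x z.

Lemma sub_updownc (S : set T) : S `<=` updownc le S.
Proof. by move=> x Sx; split; exists x. Qed.

Lemma updownc_mono {S S' : set T} : S `<=` S' -> updownc le S `<=` updownc le S'.
Proof.
by move=> SS' y [[a Sa ay] [b Sb yb]]; split; [exists a|exists b] => //; apply: SS'.
Qed.

Lemma updownc_convex (S : set T) : order_convex le (updownc le S).
Proof.
move=> y1 x y2 [[a Sa ay1] _] [_ [b Sb y2b]] y1x xy2; split.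
- by exists a => //; exact: le_trans ay1 y1x.
- by exists b => //; exact: le_trans xy2 y2b.
Qed.

Lemma convex_updownc (S : set T) : order_convex le S -> updownc le S = S.
Proof.
move=> convS; apply/seteqP; split; last exact: sub_updownc.
by move=> x [[a Sa ax] [b Sb xb]]; exact: convS Sa Sb ax xb.
Qed.

Lemma upc_updownc (S : set T) : upc le (updownc le S) = upc le S.
Proof.
apply/seteqP; split.
- by move=> z [w [[a Sa aw] _] wz]; exists a => //; exact: le_trans aw wz.
- by move=> z [a Sa az]; exists a => //; exact: sub_updownc.
Qed.

Lemma downc_updownc (S : set T) : downc le (updownc le S) = downc le S.
Proof.
apply/seteqP; split.
- by move=> z [w [_ [a Sa wa]] zw]; exists a => //; exact: le_trans zw wa.
- by move=> z [a Sa az]; exists a => //; exact: sub_updownc.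
Qed.

(* Meeting, or being contained in, an upset or a downset only depends on the
   convex hull; this is why V^c f is compatible with the subbase. *)
Lemma updownc_meet (S U : set T) : is_upset le U \/ is_downset le U ->
  (updownc le S `&` U !=set0) <-> (S `&` U !=set0).
Proof.
move=> uU; split; last first.
  by case=> x [Sx Ux]; exists x; split => //; exact: sub_updownc.
case=> y [[[a Sa ay] [b Sb yb]] Uy]; case: uU => uU.
- by exists b; split => //; exact: uU yb.
- by exists a; split => //; exact: uU ay.
Qed.

Lemma updownc_sub (S U : set T) : is_upset le U \/ is_downset le U ->
  (updownc le S `<=` U) <-> (S `<=` U).
Proof.
move=> uU; split; first by move=> H x /sub_updownc /H.
move=> SU y [[a Sa ay] [b Sb yb]]; case: uU => uU.
- exact: uU (SU _ Sa) ay.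
- exact: uU (SU _ Sb) yb.
Qed.
End UpDownClosure.

Section VcBasics.
Context {X : topologicalType} (le : X -> X -> Prop).
Local Notation VCX := (VC X le).

Lemma vc_ext (K L : VCX) : proj1_sig K = proj1_sig L -> K = L.
Proof. by case: K L => K pK [L pL] /= e; exact: eq_exist. Qed.

Lemma vc_subbase_open p : vc_subbase_index le p -> open (vc_subbase le p).
Proof.
move=> ip; exists [set vc_subbase le p]; first by move=> _ ->; exact: finI_from1.
by apply/seteqP; split => [K [_ -> //]|K pK]; exists (vc_subbase le p).
Qed.

Lemma vc_diamond_open (U : set X) : open U -> is_upset le U \/ is_downset le U ->
  open (vc_diamond le U).
Proof. by move=> oU uU; exact: (@vc_subbase_open (true, U)). Qed.

Lemma vc_box_open (U : set X) : open U -> is_upset le U \/ is_downset le U ->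
  open (vc_box le U).
Proof. by move=> oU uU; exact: (@vc_subbase_open (false, U)). Qed.

Lemma vc_cvg (F : set_system VCX) {FF : Filter F} (K : VCX) :
  (forall p, vc_subbase_index le p -> vc_subbase le p K -> F (vc_subbase le p)) ->
  F --> K.
Proof.
move=> H A; rewrite nbhsE => -[_ [[D sD <-] [B DB BK]] BA].
have [s ss sB] := sD _ DB.
have FB : F B.
  rewrite -sB; apply: filter_bigI => i si; apply: H; first exact/set_mem/ss.
  by move: BK; rewrite -sB; apply.
by apply: filterS FB => L BL; apply: BA; exists B.
Qed.
End VcBasics.

(* The Egli-Milner relation on closed convex sets is a partial order as soon as
   le is reflexive: antisymmetry holds because a convex set is the
   intersection of its up- and down-closures. *)
Lemma vc_le_po {X : topologicalType} {le : X -> X -> Prop} :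
  (forall x, le x x) -> is_partial_order (vc_le le).
Proof.
move=> le_refl; split.
- by move=> K; split.
- move=> K L M [KL1 KL2] [LM1 LM2].
  by split; [exact: subset_trans LM1 KL1 | exact: subset_trans KL2 LM2].
- move=> K L [KL1 KL2] [LK1 LK2]; apply: vc_ext.
  case: (svalP K) (svalP L) => _ convK [_ convL].
  rewrite -(convex_updownc le_refl _ convK) -(convex_updownc le_refl _ convL).
  rewrite /updownc.
  by congr (_ `&` _); apply/seteqP; split.
Qed.

Section VcCompOrd.
Context {X : topologicalType} {le : X -> X -> Prop} (cX : compord le).
Local Notation VCX := (VC X le).

(* If K is not below L, the failure is witnessed by a subbasic open box or
   diamond around K and L; this gives both closedness of the order and the
   Hausdorff property. *)
Lemma vc_sep (K L : VCX) : ~ vc_le le K L ->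
  exists A B, [/\ open A, open B, A K, B L &
    forall K' L', A K' -> B L' -> ~ vc_le le K' L'].
Proof.
move=> nKL.
have [cK _] := svalP K; have [cL _] := svalP L.
have [s1|ns1] := pselect (proj1_sig L `<=` upc le (proj1_sig K)); last first.
  have [y /not_implyP [Ly nKy]] := (existsNP _).2 ns1.
  have [U [D [[oU uU oD dD] [KU Dy UD]]]] := sep_up cX _ _ cK nKy.
  exists (vc_box le U), (vc_diamond le D); split.
  - by apply: vc_box_open => //; left.
  - by apply: vc_diamond_open => //; right.
  - exact: KU.
  - by exists y.
  - move=> K' L' K'U [y' [L'y' Dy']] [H1 _].
    have [k K'k ky'] : upc le (proj1_sig K') y'.
      by apply: H1; exists y' => //; exact: compord_refl.
    exact: UD y' (uU _ _ (K'U _ K'k) ky') Dy'.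
have [s2|ns2] := pselect (proj1_sig K `<=` downc le (proj1_sig L)); last first.
  have [x /not_implyP [Kx nLx]] := (existsNP _).2 ns2.
  have [D [U [[oD dD oU uU] [LD Ux DU]]]] := sep_down cX _ _ cL nLx.
  exists (vc_diamond le U), (vc_box le D); split.
  - by apply: vc_diamond_open => //; left.
  - by apply: vc_box_open => //; right.
  - by exists x.
  - exact: LD.
  - move=> K' L' [x' [K'x' Ux']] L'D [_ H2].
    have [l L'l x'l] : downc le (proj1_sig L') x'.
      by apply: H2; exists x' => //; exact: compord_refl.
    exact: DU x' (dD _ _ (L'D _ L'l) x'l) Ux'.
exfalso; apply: nKL; split.
- move=> z [l Ll lz]; have [k Kk kl] := s1 _ Ll.
  by exists k => //; exact: (compord_trans cX kl lz).
- move=> z [k Kk zk]; have [l Ll kl] := s2 _ Kk.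
  by exists l => //; exact: (compord_trans cX zk kl).
Qed.

Lemma vc_le_closed : closed [set p : VCX * VCX | vc_le le p.1 p.2].
Proof.
rewrite -[X in closed X]setCK; apply: open_closedC.
rewrite openE => -[K L] /= nKL.
have [A [B [oA oB AK BL H]]] := vc_sep _ _ nKL.
exists (A, B); first by split; apply: open_nbhs_nbhs.
by case=> K' L' [/= AK' BL']; exact: H.
Qed.

Lemma vc_hausdorff : hausdorff_space VCX.
Proof.
have [vc_refl _ vc_anti] := vc_le_po (compord_refl cX).
rewrite open_hausdorff => K L KL.
have [nKL|nLK] : ~ vc_le le K L \/ ~ vc_le le L K.
  apply: contra_notP (negP KL) => /not_orP [/contra_notP H1 /contra_notP H2].
  by apply/eqP; apply: vc_anti; [exact: H1|exact: H2].
- have [A [B [oA oB AK BL H]]] := vc_sep _ _ nKL.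
  exists (A, B); first by split; exact/mem_set.
  split => //; apply/eqP/seteqP; split => // M0 [AM BM].
  exact: (H M0 M0 AM BM (vc_refl M0)).
- have [A [B [oA oB AL BK H]]] := vc_sep _ _ nLK.
  exists (B, A); first by split; exact/mem_set.
  split => //; apply/eqP/seteqP; split => // M0 [BM AM].
  exact: (H M0 M0 AM BM (vc_refl M0)).
Qed.

(* The candidate limit of an ultrafilter F on V^c X: the points x such that
   every open neighbourhood of x meets F-almost every element. *)
Definition vc_adherent (F : set_system VCX) : set X :=
  [set x | forall W, open W -> W x -> F (vc_diamond le W)].

Lemma vc_adherent_closed (F : set_system VCX) : closed (vc_adherent F).
Proof.
rewrite -[vc_adherent F]setCK; apply: open_closedC; rewrite openE => x /= nAx.
have [W /not_implyP [oW /not_implyP [Wx nFW]]] := (existsNP _).2 nAx.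
apply: filterS (open_nbhs_nbhs (conj oW Wx)) => x' Wx' H; apply: nFW.
exact: H W oW Wx'.
Qed.

(* If the hull of the adherent set lies in the open set U, then F-almost
   every element lies in U: otherwise F-almost every element would meet the
   compact set X \ U, which then contains an adherent point. *)
Lemma vc_adherent_box (F : set_system VCX) (FU : UltraFilter F) (U : set X) :
  open U -> updownc le (vc_adherent F) `<=` U -> F (vc_box le U).
Proof.
move=> oU MU; have FF : ProperFilter F by exact: ultra_proper.
have [//|Fc] := in_ultra_setVsetC (vc_box le U) FU; exfalso.
have /compact_near_coveringP ncC := closed_compact cX (open_closedC oU).
have FC : F [set K : VCX | (~` U) `<=` (fun x => ~ proj1_sig K x)].
  apply: (ncC VCX F (fun (K : VCX) x => ~ proj1_sig K x) FF) => x nUx.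
  have nAx : ~ vc_adherent F x.
    by move=> Ax; apply: nUx; apply: MU; exact: sub_updownc (compord_refl cX) _ _ Ax.
  have [W /not_implyP [oW /not_implyP [Wx nFW]]] := (existsNP _).2 nAx.
  have [//|FcW] := in_ultra_setVsetC (vc_diamond le W) FU.
  exists (W, ~` vc_diamond le W); first by split => //=; exact: open_nbhs_nbhs.
  by case=> x' K' /= [Wx' nK'W] K'x'; apply: nK'W; exists x'.
have [K' [nK'U K'C]] := filter_ex (filterI Fc FC).
have [x /not_implyP [K'x nUx]] := (existsNP _).2 nK'U.
exact: K'C x nUx K'x.
Qed.

(* An ultrafilter on V^c X converges to the convex hull of its adherent set. *)
Lemma vc_compact : compact [set: VCX].
Proof.
rewrite compact_ultra => F FU _.
pose M := updownc le (vc_adherent F).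
have cM : closed M.
  have cA := vc_adherent_closed F.
  by apply: closedI; [exact: (upc_closed cX cA) | exact: (downc_closed cX cA)].
have convM : order_convex le M.
  exact: (updownc_convex (fun _ _ _ => compord_trans cX) (vc_adherent F)).
pose K := exist (fun S => closed S /\ order_convex le S) M (conj cM convM) : VCX.
exists K; split => //; apply: vc_cvg => -[b U] [/= oU uU]; case: b => /=.
- case=> y [[[l Al ly] [l' Al' yl']] Uy].
  case: uU => uU; [apply: Al' => //; exact: uU yl' | apply: Al => //; exact: uU ly].
- exact: vc_adherent_box.
Qed.

Lemma vc_compord : compord (vc_le le).
Proof.
split; [exact: vc_compact | exact: vc_hausdorff | | exact: vc_le_closed].
exact: vc_le_po (compord_refl cX).
Qed.
End VcCompOrd.

Section VcMap.
Context {X Y : topologicalType} {leX : X -> X -> Prop} {leY : Y -> Y -> Prop}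
  (cX : compord leX) (cY : compord leY) {f : X -> Y}
  (hf : compord_hom leX leY f).

(* The hull of f[K] is closed and convex, so V^c f K is exactly that hull. *)
Lemma vc_map_set (K : VC X leX) :
  proj1_sig (vc_map leX leY f K) = updownc leY (f @` proj1_sig K).
Proof.
rewrite /vc_map; case: pselect => // -[]; split.
- have cfK : closed (f @` proj1_sig K).
    exact: continuous_closed_image (compord_compact cX) (compord_hausdorff cY)
      hf.1 (proj1 (svalP K)).
  by apply: closedI; [exact: (upc_closed cY cfK) | exact: (downc_closed cY cfK)].
- exact: updownc_convex (fun _ _ _ => compord_trans cY) _.
Qed.

Lemma vc_map_mono (K L : VC X leX) : vc_le leX K L ->
  vc_le leY (vc_map leX leY f K) (vc_map leX leY f L).
Proof.
have leY_trans := fun x y z => @compord_trans _ _ cY x y z.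
move=> [KL1 KL2]; rewrite /vc_le !vc_map_set.
rewrite !(upc_updownc (compord_refl cY) leY_trans).
rewrite !(downc_updownc (compord_refl cY) leY_trans).
split.
- move=> z [_ [l Ll <-] flz].
  have [k Kk kl] : upc leX (proj1_sig K) l.
    by apply: KL1; exists l => //; exact: compord_refl.
  by exists (f k); [exists k | exact: (compord_trans cY (hf.2 _ _ kl) flz)].
- move=> z [_ [k Kk <-] zfk].
  have [l Ll kl] : downc leX (proj1_sig L) k.
    by apply: KL2; exists k => //; exact: compord_refl.
  by exists (f l); [exists l | exact: (compord_trans cY zfk (hf.2 _ _ kl))].
Qed.

Lemma vc_map_preimage (b : bool) (U : set Y) :
  is_upset leY U \/ is_downset leY U ->
  vc_map leX leY f @^-1` vc_subbase leY (b, U) = vc_subbase leX (b, f @^-1` U).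
Proof.
move=> uU; have leY_refl := compord_refl cY.
apply/seteqP; split => K /=; case: b;
  rewrite /vc_subbase /vc_diamond /vc_box /= vc_map_set.
- by move=> /(updownc_meet leY_refl _ _ uU) [_ [[x Kx <-] Ufx]]; exists x.
- by move=> /(updownc_sub leY_refl _ _ uU) H x Kx; apply: H; exists x.
- move=> [x [Kx Ufx]]; apply/(updownc_meet leY_refl _ _ uU).
  by exists (f x); split => //; exists x.
- by move=> H; apply/(updownc_sub leY_refl _ _ uU) => _ [x Kx <-]; exact: H.
Qed.

Lemma vc_map_hom : compord_hom (vc_le leX) (vc_le leY) (vc_map leX leY f).
Proof.
split; last exact: vc_map_mono.
move=> K; have FF : Filter (vc_map leX leY f @ K).
  by apply: fmap_filter; exact: nbhs_filter.
apply: vc_cvg => -[b U] [/= oU uU] HK.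
rewrite /= -/(nbhs _ _) vc_map_preimage //.
apply: open_nbhs_nbhs; split; last by rewrite -vc_map_preimage.
apply: vc_subbase_open; split => /=; first by move/continuousP : hf.1; apply.
by case: uU => uU; [left|right] => x y Ufx xy; exact: uU (hf.2 _ _ xy).
Qed.
End VcMap.

Lemma vc_map_comp_set {A B C : topologicalType} {leA : A -> A -> Prop}
  {leB : B -> B -> Prop} {leC : C -> C -> Prop}
  (cA : compord leA) (cB : compord leB) (cC : compord leC)
  {p : A -> B} {q : B -> C} (hp : compord_hom leA leB p)
  (hq : compord_hom leB leC q) (K : VC A leA) :
  proj1_sig (vc_map leB leC q (vc_map leA leB p K)) =
  updownc leC ((q \o p) @` proj1_sig K).
Proof.
have leC_refl := compord_refl cC.
have leC_trans := fun x y z => @compord_trans _ _ cC x y z.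
rewrite (vc_map_set cB cC hq) (vc_map_set cA cB hp).
apply/seteqP; split; last first.
  apply: updownc_mono => _ [a Ka <-]; exists (p a) => //.
  by apply: sub_updownc (compord_refl cB) _ _ _; exists a.
have qS : q @` updownc leB (p @` proj1_sig K) `<=`
    updownc leC ((q \o p) @` proj1_sig K).
  move=> _ [y [[_ [a1 Ka1 <-] a1y] [_ [a2 Ka2 <-] ya2]] <-]; split.
  + by exists (q (p a1)); [exists a1 | exact: hq.2].
  + by exists (q (p a2)); [exists a2 | exact: hq.2].
move=> z /(updownc_mono qS) [z1 z2]; split.
+ by rewrite -(upc_updownc leC_refl leC_trans); exact: z1.
+ by rewrite -(downc_updownc leC_refl leC_trans); exact: z2.
Qed.

Lemma const_compord_hom {Z W : topologicalType} {leZ : Z -> Z -> Prop}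
  {leW : W -> W -> Prop} {w : W} : leW w w -> compord_hom leZ leW (fun=> w).
Proof. by move=> ww; split; [exact: cst_continuous | move=> *]. Qed.

Lemma compord_pullback {E X : topologicalType} {leX : X -> X -> Prop}
  (cX : compord leX) (h : E -> X) :
  compact [set: E] -> hausdorff_space E -> continuous h -> injective h ->
  compord (fun a b => leX (h a) (h b)).
Proof.
move=> cE hE ch hinj; split => //.
- split => [a|a b c|a b] /=; first exact: compord_refl.
  + exact: compord_trans.
  + by move=> ab ba; apply: hinj; exact: compord_antisym ab ba.
- have -> : [set p : E * E | leX (h p.1) (h p.2)] =
      (fun p : E * E => (h p.1, h p.2)) @^-1` [set p : X * X | leX p.1 p.2] by [].
  apply: preimage_closed; last exact: compord_le_closed.
  move=> [a b] _; apply: cvg_pair.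
  + by apply: cvg_comp; [exact: cvg_fst | exact: ch].
  + by apply: cvg_comp; [exact: cvg_snd | exact: ch].
Qed.

(* An equalizer h of f, g in CompOrd is an order embedding whose image is
   {x | f x = g x}: test the universal property with constant maps and with
   E carrying the order pulled back along h. *)
Section EqualizerInCompOrd.
Context {E X Y : topologicalType} {leE : E -> E -> Prop} {leX : X -> X -> Prop}
  {leY : Y -> Y -> Prop} {h : E -> X} {f g : X -> Y}
  (heq : is_equalizer leE leX leY h f g).

Let cE : compord leE. Proof. by case: heq => -[]. Qed.
Let cX : compord leX. Proof. by case: heq => -[_ []]. Qed.
Let hh : compord_hom leE leX h. Proof. by case: heq => _ []. Qed.

Lemma equalizer_image (x : X) : f x = g x -> exists e, h e = x.
Proof.
move=> fgx; case: heq => _ _ _ univ.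
have [v [[_ hv] _]] := univ X leX cX (fun=> x)
  (const_compord_hom (compord_refl cX x)) (funext (fun _ => fgx)).
by exists (v x); exact: (congr1 (fun F => F x) hv).
Qed.

Lemma equalizer_inj : injective h.
Proof.
move=> a b hab; case: heq => _ _ fhgh univ.
have fha : f (h a) = g (h a) by exact: (congr1 (fun F => F a) fhgh).
have [v [_ vuniq]] := univ X leX cX (fun=> h a)
  (const_compord_hom (compord_refl cX _)) (funext (fun _ => fha)).
have va := vuniq (fun=> a)
  (conj (const_compord_hom (compord_refl cE a)) (erefl _)).
have vb := vuniq (fun=> b)
  (conj (const_compord_hom (compord_refl cE b)) (funext (fun _ => esym hab))).
exact: (congr1 (fun F => F (h a)) (etrans (esym va) vb)).
Qed.

Lemma equalizer_reflects (a b : E) : leX (h a) (h b) -> leE a b.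
Proof.
case: heq => _ _ fhgh univ.
have cZ := compord_pullback cX h (compord_compact cE) (compord_hausdorff cE)
  hh.1 equalizer_inj.
have [v [[[_ vmono] hv] _]] := univ E _ cZ h (conj hh.1 (fun _ _ H => H)) fhgh.
have vid z : v z = z by apply: equalizer_inj; exact: (congr1 (fun F => F z) hv).
by move=> hab; have := vmono a b hab; rewrite !vid.
Qed.
End EqualizerInCompOrd.

(* The role of the common retraction k: extremal points of a set L on which
   f and g have the same up-closed (down-closed) image are equalized. *)
Section CommonRetraction.
Context {X Y : Type} {leX : X -> X -> Prop} {leY : Y -> Y -> Prop} {k : Y -> X}.
Hypothesis leY_refl : forall y, leY y y.
Hypothesis leY_anti : forall y y', leY y y' -> leY y' y -> y = y'.
Hypothesis k_mono : forall y y', leY y y' -> leX (k y) (k y').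

(* If f l <= g m with l in L, then l <= m after applying k; so minimality of m
   forces l = m. *)
Lemma minimal_point_le {f g : X -> Y} {L : set X} {m : X} :
  k \o f = id -> k \o g = id -> (forall l, L l -> leX l m -> l = m) ->
  upc leY (f @` L) (g m) -> leY (f m) (g m).
Proof.
move=> kf kg mmin [_ [l Ll <-] flgm].
have kfl : k (f l) = l by exact: (congr1 (fun F => F l) kf).
have kgm : k (g m) = m by exact: (congr1 (fun F => F m) kg).
have lm : leX l m by rewrite -kfl -kgm; exact: k_mono.
by rewrite (mmin l Ll lm) in flgm.
Qed.

Lemma minimal_point_equalized {f g : X -> Y} {L : set X} {m : X} :
  k \o f = id -> k \o g = id -> upc leY (f @` L) = upc leY (g @` L) ->
  L m -> (forall l, L l -> leX l m -> l = m) -> f m = g m.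
Proof.
move=> kf kg eL Lm mmin; apply: leY_anti.
- apply: (minimal_point_le kf kg mmin); rewrite eL.
  by exists (g m); [exists m | exact: leY_refl].
- apply: (minimal_point_le kg kf mmin); rewrite -eL.
  by exists (f m); [exists m | exact: leY_refl].
Qed.
End CommonRetraction.

Lemma open_upset_trace {E X : topologicalType} {leE : E -> E -> Prop}
  {leX : X -> X -> Prop} (cE : compord leE) (cX : compord leX) {h : E -> X}
  (hh : compord_hom leE leX h)
  (h_reflects : forall a b, leX (h a) (h b) -> leE a b)
  (U : set E) : open U -> is_upset leE U ->
  exists U', [/\ open U', is_upset leX U' & h @^-1` U' = U].
Proof.
move=> oU uU; exists (~` downc leX (h @` ~` U)); split.
- apply/closed_openC/(downc_closed cX).
  exact: continuous_closed_image (compord_compact cE) (compord_hausdorff cX)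
    hh.1 (open_closedC oU).
- move=> x y nx xy [w [c nUc hcw] yw]; apply: nx; exists w; first by exists c.
  exact: (compord_trans cX xy yw).
- apply/seteqP; split => e /=.
  + move=> nd; apply: contra_notP nd => nUe; exists (h e); first by exists e.
    exact: compord_refl.
  + by move=> Ue [_ [c nUc <-] ec]; apply: nUc; exact: uU Ue (h_reflects _ _ ec).
Qed.

(* V^c h is an equalizer of V^c f and V^c g whenever h is an order embedding
   onto {x | f x = g x} and f, g have a common retraction k.  Its inverse on
   the equalized elements is L |-> h^-1(L). *)
Section VcEqualizer.
Context {E X Y : topologicalType} {leE : E -> E -> Prop} {leX : X -> X -> Prop}
  {leY : Y -> Y -> Prop} (cE : compord leE) (cX : compord leX) (cY : compord leY)
  {f g : X -> Y} {k : Y -> X} {h : E -> X}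
  (hf : compord_hom leX leY f) (hg : compord_hom leX leY g)
  (hk : compord_hom leY leX k) (kf : k \o f = id) (kg : k \o g = id)
  (hh : compord_hom leE leX h)
  (h_reflects : forall a b, leX (h a) (h b) -> leE a b)
  (h_image : forall x, f x = g x -> exists e, h e = x).

Definition vc_equalized (L : VC X leX) :=
  vc_map leX leY f L = vc_map leX leY g L.

Lemma equalized_closures (L : VC X leX) : vc_equalized L ->
  upc leY (f @` proj1_sig L) = upc leY (g @` proj1_sig L) /\
  downc leY (f @` proj1_sig L) = downc leY (g @` proj1_sig L).
Proof.
have leY_trans := fun x y z => @compord_trans _ _ cY x y z.
move=> /(congr1 sval); rewrite /= (vc_map_set cX cY hf) (vc_map_set cX cY hg) => e.
have leY_refl := compord_refl cY.
rewrite -(upc_updownc leY_refl leY_trans) e (upc_updownc leY_refl leY_trans).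
by rewrite -(downc_updownc leY_refl leY_trans) e (downc_updownc leY_refl leY_trans).
Qed.

(* Every point of an equalized L lies between two points of L in the image of
   h, namely a minimal point below it and a maximal point above it. *)
Lemma equalized_between {L : VC X leX} : vc_equalized L -> forall x, proj1_sig L x ->
  (exists2 e, proj1_sig L (h e) & leX (h e) x) /\
  (exists2 e, proj1_sig L (h e) & leX x (h e)).
Proof.
move=> /equalized_closures [eU eD] x Lx; have [cL _] := svalP L.
split.
- have [m [Lm mx mmin]] := minimal_below cX _ _ cL Lx.
  have [e he] := h_image _ (minimal_point_equalized (compord_refl cY)
    (fun _ _ => compord_antisym cY) hk.2 kf kg eU Lm mmin).
  by exists e; rewrite he.
- have [m [Lm xm mmax]] := maximal_above cX _ _ cL Lx.
  have [e he] := h_image _ (minimal_point_equalized (leX := fun a b => leX b a)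
    (leY := fun a b => leY b a) (compord_refl cY)
    (fun _ _ yx xy => compord_antisym cY xy yx) (fun _ _ H => hk.2 _ _ H)
    kf kg eD Lm mmax).
  by exists e; rewrite he.
Qed.

Lemma vc_preimage_prop (L : VC X leX) :
  closed (h @^-1` proj1_sig L) /\ order_convex leE (h @^-1` proj1_sig L).
Proof.
have [cL convL] := svalP L; split.
- by apply: preimage_closed => // x _; exact: hh.1.
- move=> e1 e e2 /= L1 L2 e1e ee2.
  exact: convL L1 L2 (hh.2 _ _ e1e) (hh.2 _ _ ee2).
Qed.

Definition vc_preimage (L : VC X leX) : VC E leE :=
  exist _ (h @^-1` proj1_sig L) (vc_preimage_prop L).

Lemma vc_preimage_map (K : VC E leE) : vc_preimage (vc_map leE leX h K) = K.
Proof.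
apply: vc_ext => /=; rewrite (vc_map_set cE cX hh); apply/seteqP; split.
- move=> e [[_ [a1 Ka1 <-] h1] [_ [a2 Ka2 <-] h2]]; have [_ convK] := svalP K.
  exact: convK Ka1 Ka2 (h_reflects _ _ h1) (h_reflects _ _ h2).
- by move=> e Ke; apply: sub_updownc (compord_refl cX) _ _ _; exists e.
Qed.

Lemma vc_map_preimage_equalized (L : VC X leX) : vc_equalized L ->
  vc_map leE leX h (vc_preimage L) = L.
Proof.
move=> eL; apply: vc_ext; rewrite (vc_map_set cE cX hh) /=; apply/seteqP; split.
- have [_ convL] := svalP L.
  rewrite -[X in _ `<=` X](convex_updownc (compord_refl cX) _ convL).
  by apply: updownc_mono => _ [e Le <-].
- move=> x Lx; have [[e1 L1 e1x] [e2 L2 xe2]] := equalized_between eL _ Lx.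
  by split; [exists (h e1) => //; exists e1 | exists (h e2) => //; exists e2].
Qed.

Lemma vc_preimage_mono (L L' : VC X leX) : vc_equalized L -> vc_equalized L' ->
  vc_le leX L L' -> vc_le leE (vc_preimage L) (vc_preimage L').
Proof.
move=> eL eL' [LL1 LL2]; split => /=.
- move=> e [e' L'e' e'e].
  have [l Ll le'] : upc leX (proj1_sig L) (h e').
    by apply: LL1; exists (h e') => //; exact: compord_refl.
  have [[a La al] _] := equalized_between eL _ Ll.
  exists a => //; apply: (compord_trans cE _ e'e).
  exact: h_reflects (compord_trans cX al le').
- move=> e [e' Le' ee'].
  have [l L'l e'l] : downc leX (proj1_sig L') (h e').
    by apply: LL2; exists (h e') => //; exact: compord_refl.
  have [_ [b Lb lb]] := equalized_between eL' _ L'l.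
  exists b => //; apply: (compord_trans cE ee').
  exact: h_reflects (compord_trans cX e'l lb).
Qed.

Lemma open_trace (U : set E) : open U -> is_upset leE U \/ is_downset leE U ->
  exists U', [/\ open U', is_upset leX U' \/ is_downset leX U' & h @^-1` U' = U].
Proof.
move=> oU [uU|dU].
- have [U' [oU' uU' <-]] := open_upset_trace cE cX hh h_reflects U oU uU.
  by exists U'; split => //; left.
- have hh' : compord_hom (fun a b => leE b a) (fun x y => leX y x) h.
    by split; [exact: hh.1 | move=> a b; exact: hh.2].
  have [U' [oU' dU' <-]] := open_upset_trace (compord_dual cE) (compord_dual cX)
    hh' (fun a b => h_reflects b a) U oU dU.
  by exists U'; split => //; right.
Qed.

Lemma vc_preimage_subbase {L : VC X leX} (b : bool) {U' : set X} :
  vc_equalized L -> is_upset leX U' \/ is_downset leX U' ->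
  vc_subbase leE (b, h @^-1` U') (vc_preimage L) <-> vc_subbase leX (b, U') L.
Proof.
move=> eL uU; case: b; rewrite /vc_subbase /vc_diamond /vc_box /=; split.
- by case=> e [Le Ue]; exists (h e).
- case=> x [Lx Ux]; have [[e1 L1 e1x] [e2 L2 xe2]] := equalized_between eL _ Lx.
  by case: uU => uU; [exists e2 | exists e1]; split => //=; exact: uU Ux _.
- move=> H x Lx; have [[e1 L1 e1x] [e2 L2 xe2]] := equalized_between eL _ Lx.
  by case: uU => uU; [exact: uU (H e1 L1) e1x | exact: uU (H e2 L2) xe2].
- by move=> H e Le; exact: H.
Qed.

Lemma vc_preimage_continuous {Z : topologicalType} (u : Z -> VC X leX) :
  continuous u -> (forall z, vc_equalized (u z)) -> continuous (vc_preimage \o u).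
Proof.
move=> cu eu z.
have FF : Filter ((vc_preimage \o u) @ z) by apply: fmap_filter; exact: nbhs_filter.
apply: vc_cvg => -[b U] [/= oU uU] HU.
have [U' [oU' uU' eU]] := open_trace U oU uU.
rewrite -eU in HU *.
have oS : open (u @^-1` vc_subbase leX (b, U')).
  by move/continuousP : cu; apply; apply: vc_subbase_open.
apply: filterS (open_nbhs_nbhs (conj oS _)).
  by move=> z' Sz'; apply/(vc_preimage_subbase b (eu z') uU').
by apply/(vc_preimage_subbase b (eu z) uU').
Qed.

Lemma vc_equalizer_lift {Z : topologicalType} {leZ : Z -> Z -> Prop}
  {u : Z -> VC X leX} (hu : compord_hom leZ (vc_le leX) u)
  (fu : vc_map leX leY f \o u = vc_map leX leY g \o u) :
  exists! v : Z -> VC E leE,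
    compord_hom leZ (vc_le leE) v /\ vc_map leE leX h \o v = u.
Proof.
have eu z : vc_equalized (u z) by exact: (congr1 (fun F => F z) fu).
exists (vc_preimage \o u); split; first split; first split.
- exact: vc_preimage_continuous hu.1 eu.
- by move=> z z' zz'; apply: vc_preimage_mono => //; exact: hu.2.
- by apply: funext => z /=; exact: vc_map_preimage_equalized.
- by move=> w [_ hw]; apply: funext => z /=; rewrite -hw /= vc_preimage_map.
Qed.
End VcEqualizer.

Theorem proposition3p23
  (E X Y : topologicalType)
  (leE : E -> E -> Prop) (leX : X -> X -> Prop) (leY : Y -> Y -> Prop)
  (cE : compord leE) (cX : compord leX) (cY : compord leY)
  (f g : X -> Y) (k : Y -> X) (h : E -> X)
  (hf : compord_hom leX leY f) (hg : compord_hom leX leY g)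
  (hk : compord_hom leY leX k)
  (kf : k \o f = id) (kg : k \o g = id)
  (heq : is_equalizer leE leX leY h f g) :
  is_equalizer (vc_le leE) (vc_le leX) (vc_le leY)
    (vc_map leE leX h) (vc_map leX leY f) (vc_map leX leY g).
Proof.
have hh : compord_hom leE leX h by case: heq => _ [].
have fhgh : f \o h = g \o h by case: heq.
split.
- by split; [|split]; exact: vc_compord.
- by split; [|split]; exact: vc_map_hom.
- apply: funext => K; apply: vc_ext => /=.
  by rewrite (vc_map_comp_set cE cX cY hh hf) (vc_map_comp_set cE cX cY hh hg) fhgh.
- move=> Z leZ _ u hu fu.
  exact: (vc_equalizer_lift cE cX cY hf hg hk kf kg hh
    (equalizer_reflects heq) (equalizer_image heq) hu fu).
Qed.
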